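(* Let $k$ be a positive integer. For integers $0\le j\le k$ define the $q$-fibonomial coefficient $$\left\langle \begin{matrix} k \\ j \end{matrix} \right\rangle (x, s, q) = \frac{\prod_{i=1}^k f(i, x, s)}{\prod_{i=1}^j f(i, x, q^{j-i}s) \prod_{i=1}^{k-j} f(i, x, q^{j} s)}.$$ Then for all $n \in \mathbb{Z}$, $$\sum_{j=0}^{k+1} (-1)^{\binom{j+1}{2}} s^{\binom{j}{2}} q^{\frac{j(j-1)(2j-1)}{6}} \left\langle \begin{matrix} k+1 \\ j \end{matrix} \right\rangle (x, s, q)\, f(n-j, x, q^j s)^k = 0.$$
   Context: Let $x,s,q$ be indeterminates; all quantities live in the field of rational functions in $x,s,q$. The Carlitz $q$-Fibonacci polynomials $f(n,x,s)$ are defined by $f(0,x,s)=0$, $f(1,x,s)=1$ and $f(n, x, s) = x f(n-1, x, s) + q^{n-2} s f(n-2, x, s)$; this recurrence is required to hold for all $n\in\mathbb{Z}$, which uniquely extends $f(n,x,s)$ to negative $n$. Here $f(n,x,q^a s)$ means $f(n,x,s)$ with $s$ replaced by $q^a s$ (with the same $q$). *)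

From HB Require Import structures.
From mathcomp Require Import all_boot all_order all_algebra.
Set Implicit Arguments. Unset Strict Implicit. Unset Printing Implicit Defensive.
Import Order.TTheory GRing.Theory Num.Theory.
Local Open Scope ring_scope.

(* The field Q(x,s,q) of rational functions, built as Q(q)(s)(x). *)
Definition Fq := {fraction {poly rat}}.
Definition Fqs := {fraction {poly Fq}}.
Definition Fxsq := {fraction {poly Fqs}}.

Definition q_Fq : Fq := tofrac 'X.
Definition s_Fqs : Fqs := tofrac 'X.
Definition q_Fqs : Fqs := tofrac (q_Fq%:P).
Definition varx : Fxsq := tofrac 'X.
Definition vars : Fxsq := tofrac (s_Fqs%:P).
Definition varq : Fxsq := tofrac (q_Fqs%:P).

Section Fib.
Variable K : fieldType.

(* fib_pos x s q m = (f(m), f(m+1)) for m >= 0 *)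
Fixpoint fib_pos (x s q : K) (m : nat) : K * K :=
  match m with
  | 0%N => (0, 1)
  | m'.+1 => let p := fib_pos x s q m' in
             (p.2, x * p.2 + q ^ (m'%:Z) * s * p.1)
  end.

(* fib_neg x s q m = (f(-m), f(-m+1)) for m >= 0, obtained by running the
   recurrence f(n) = x f(n-1) + q^(n-2) s f(n-2) backwards at n = -m+1 *)
Fixpoint fib_neg (x s q : K) (m : nat) : K * K :=
  match m with
  | 0%N => (0, 1)
  | m'.+1 => let p := fib_neg x s q m' in
             ((p.2 - x * p.1) / (q ^ (- (m'%:Z) - 1) * s), p.1)
  end.

Definition fib (x s q : K) (n : int) : K :=
  match n with
  | Posz m => (fib_pos x s q m).1
  | Negz m => (fib_neg x s q m.+1).1
  end.

Definition fibonomial (x s q : K) (k j : nat) : K :=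
  (\prod_(1 <= i < k.+1) fib x s q i%:Z) /
  ((\prod_(1 <= i < j.+1) fib x (q ^+ (j - i) * s) q i%:Z) *
   (\prod_(1 <= i < (k - j).+1) fib x (q ^+ j * s) q i%:Z)).
End Fib.

From HB Require Import structures.
From mathcomp Require Import all_boot all_order all_algebra.
From mathcomp Require Import ring zify.
Set Implicit Arguments.
Unset Strict Implicit.
Unset Printing Implicit Defensive.
Import Order.TTheory GRing.Theory Num.Theory.
Local Open Scope ring_scope.

(* For fixed s, every n |-> f(n - j, x, q^j s) solves the second-order
   recurrence y(n+2) = x y(n+1) + q^n s y(n), so it is a combination of the
   solutions for j = 0 and j = k+2, which vanish at n = 0 and n = k+2.
   Expanding one factor of each f(n - j, x, q^j s)^(k+1) in this basis writes
   the sum for k+1 as f(n, x, s) times the sum for k, plus a multiple of the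
   sum for k taken at (q s, n - 1): the fibonomial weights transform exactly
   as required, using the closed form of f(-j, x, q^j s).  Induction on k from
   k = 0 then proves the identity.  All divisions are
   legitimate because f(i, x, q^b s) has degree i - 1 in x for i > 0. *)

Section FibRecurrence.
Variables (K : fieldType) (x q : K).
Hypothesis q_neq0 : q != 0.

Local Notation F s := (fib x s q).

Definition fib_rec (s : K) (y : int -> K) :=
  forall n : int, y (n + 2) = x * y (n + 1) + q ^ n * s * y n.

Lemma fib_negE (s : K) (m : nat) : fib_neg x s q m = (F s (- m%:Z), F s (1 - m%:Z)).
Proof.
elim: m => [//|m IHm].
have -> : - m.+1%:Z = Negz m by rewrite NegzE.
have -> : 1 - m.+1%:Z = - m%:Z by rewrite -addn1 PoszD; ring.
by rewrite /= IHm.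
Qed.

Lemma fib_rec_fib (s : K) : s != 0 -> fib_rec s (F s).
Proof.
move=> s_neq0 [m|m].
  have -> : Posz m + 2 = m.+2 by rewrite -[in RHS]addn2 PoszD.
  have -> : Posz m + 1 = m.+1 by rewrite -[in RHS]addn1 PoszD.
  by [].
have -> : Negz m + 2 = 1 - m%:Z by rewrite NegzE -addn1 PoszD; ring.
have -> : Negz m + 1 = - m%:Z by rewrite NegzE -addn1 PoszD; ring.
have -> : F s (Negz m) =
  ((fib_neg x s q m).2 - x * (fib_neg x s q m).1) / (q ^ (- m%:Z - 1) * s) by [].
have -> : Negz m = - m%:Z - 1 by rewrite NegzE -addn1 PoszD; ring.
rewrite fib_negE /=.
have qm_neq0 : q ^ (- m%:Z - 1) != 0 by rewrite expfz_eq0 negb_and q_neq0 orbT.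
by field; rewrite s_neq0 qm_neq0.
Qed.

Definition fib_sh (s : K) (j : nat) (n : int) := F (q ^+ j * s) (n - j%:Z).

Section Solutions.
Variable s : K.
Hypothesis s_neq0 : s != 0.

Lemma fib_rec_eq0 y : fib_rec s y -> y 0 = 0 -> y 1 = 0 -> forall n, y n = 0.
Proof.
move=> rec_y y0 y1.
have up (m : nat) : y m = 0 /\ y m.+1 = 0.
  elim: m => [//|m [ym ySm]]; split=> //.
  have -> : Posz m.+2 = m%:Z + 2 by rewrite -[m.+2]addn2 PoszD.
  rewrite rec_y.
  have -> : Posz m + 1 = m.+1 by rewrite -[m.+1]addn1 PoszD.
  by rewrite ym ySm !mulr0 addr0.
have down (m : nat) : y (- m%:Z) = 0 /\ y (1 - m%:Z) = 0.
  elim: m => [//|m [ym ySm]].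
  have := rec_y (- m%:Z - 1).
  have -> : - m%:Z - 1 + 2 = 1 - m%:Z by ring.
  have -> : - m%:Z - 1 + 1 = - m%:Z by ring.
  rewrite ym ySm mulr0 add0r => /esym/eqP.
  rewrite !mulf_eq0 expfz_eq0 (negbTE q_neq0) (negbTE s_neq0) andbF /= => /eqP ySm'.
  have -> : 1 - m.+1%:Z = - m%:Z by rewrite -addn1 PoszD; ring.
  by have -> : - m.+1%:Z = - m%:Z - 1 by rewrite -addn1 PoszD; ring.
case=> m; first by case: (up m).
by rewrite NegzE; case: (down m.+1).
Qed.

Lemma fib_rec_uniq y z : fib_rec s y -> fib_rec s z ->
  y 0 = z 0 -> y 1 = z 1 -> forall n, y n = z n.
Proof.
move=> rec_y rec_z e0 e1 n; apply/eqP; rewrite -subr_eq0; apply/eqP.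
apply: (@fib_rec_eq0 (fun n => y n - z n)); last 2 first.
- by rewrite e0 subrr.
- by rewrite e1 subrr.
by move=> m; rewrite rec_y rec_z; ring.
Qed.

Lemma fib_rec_lin y z a b :
  fib_rec s y -> fib_rec s z -> fib_rec s (fun n => a * y n + b * z n).
Proof. by move=> rec_y rec_z m; rewrite rec_y rec_z; ring. Qed.

Lemma fib_rec_shift (j : nat) : fib_rec s (fib_sh s j).
Proof.
move=> n; rewrite /fib_sh.
have qjs_neq0 : q ^+ j * s != 0 by rewrite mulf_neq0 // expf_neq0.
rewrite -addrAC fib_rec_fib // addrAC mulrA.
have -> : n + 1 - j%:Z = n - j%:Z + 1 by ring.
by rewrite -[q ^+ j]/(q ^ j%:Z) -expfzDr // subrK.
Qed.

Lemma fib_splitl (n : int) :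
  F s n = x * F (q ^+ 1 * s) (n - 1) + q * s * F (q ^+ 2 * s) (n - 2).
Proof.
move: n; apply: fib_rec_uniq.
- exact: fib_rec_fib.
- by apply: fib_rec_lin; apply: fib_rec_shift.
- rewrite /fib /= subnn add0n subn0 oppr0 sub0r exprN1.
  rewrite -[q ^ (- 1%Z - 1)]/(q ^- 2); field; by rewrite q_neq0 s_neq0.
- rewrite /fib /= add0n subnn oppr0 sub0r exprN1; field; by rewrite q_neq0 s_neq0.
Qed.

Lemma fib_rec_basis y z w (a : int) :
  fib_rec s y -> fib_rec s z -> fib_rec s w ->
  y 0 = 0 -> y 1 = 1 -> z a = 0 -> y a != 0 -> z 0 != 0 ->
  forall n, w n = w a / y a * y n + w 0 / z 0 * z n.
Proof.
move=> rec_y rec_z rec_w y0 y1 za ya_neq0 z0_neq0.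
pose d n := w n - (w a / y a * y n + w 0 / z 0 * z n).
have rec_d : fib_rec s d by move=> m; rewrite /d rec_y rec_z rec_w; ring.
have dE : forall n, d n = d 1 * y n.
  apply: fib_rec_uniq => //; first by move=> m; rewrite rec_y; ring.
  - by rewrite /d y0 !mulr0 add0r divfK // subrr.
  - by rewrite y1 mulr1.
have d1 : d 1 = 0.
  have := dE a; rewrite {1}/d za mulr0 addr0 divfK // subrr.
  by move/esym/eqP; rewrite mulf_eq0 (negbTE ya_neq0) orbF => /eqP.
by move=> n; apply/eqP; rewrite -subr_eq0 -/(d n) dE d1 mul0r.
Qed.

End Solutions.

Lemma fib_opp_shift (s : K) (j : nat) : s != 0 ->
  F (q ^+ j * s) (- j%:Z) = - F s j / ((-1) ^+ j * s ^+ j * q ^+ 'C(j, 2)).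
Proof.
move=> s_neq0.
have qjs_neq0 (i : nat) : q ^+ i * s != 0 by rewrite mulf_neq0 // expf_neq0.
elim/ltn_ind: j => -[|[|j]] IHj.
- by rewrite oppr0 /fib /= oppr0 mul0r.
- rewrite /fib /= oppr0 sub0r exprN1 bin_small // expr1 expr0 mulr1.
  by field; rewrite q_neq0 s_neq0 oppr_eq0 oner_eq0.
have splitl := @fib_splitl _ (qjs_neq0 j) (- j%:Z).
have e1 : - j%:Z - 1 = - j.+1%:Z by rewrite -addn1 PoszD; ring.
have e2 : - j%:Z - 2 = - j.+2%:Z by rewrite -[j.+2]addn2 PoszD; ring.
rewrite !mulrA -!exprD add1n add2n e1 e2 (IHj j) // (IHj j.+1) // in splitl.
have recj : F s j.+2 = x * F s j.+1 + q ^+ j * s * F s j.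
  have := @fib_rec_fib s s_neq0 j.
  by rewrite -[j.+2]addn2 -[j.+1]addn1 !PoszD.
rewrite recj.
move/eqP: splitl; rewrite addrC -subr_eq => /eqP splitl.
apply: (mulfI (qjs_neq0 j.+1)); rewrite -splitl.
rewrite !binS bin1 bin0 !exprD !exprS.
have [sj q2j] : s ^+ j != 0 /\ q ^+ 'C(j, 2) != 0 by rewrite !expf_neq0.
have qj : q ^+ j != 0 by rewrite expf_neq0.
have sg : (-1) ^+ j != 0 :> K by rewrite signr_eq0.
field.
by rewrite sj q2j qj sg q_neq0 s_neq0 oppr_eq0 oner_eq0.
Qed.

Definition fib_nondeg (s : K) := s != 0 /\ forall b i : nat, F (q ^+ b * s) i.+1 != 0.

Lemma fib_nondegM (s : K) : fib_nondeg s -> fib_nondeg (q * s).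
Proof.
case=> s_neq0 fib_neq0; split; first by rewrite mulf_neq0.
by move=> b i; rewrite mulrA -exprSr.
Qed.

Lemma fib_nondeg_neq0 (s : K) (b i : nat) :
  fib_nondeg s -> (0 < i)%N -> F (q ^+ b * s) i != 0.
Proof. by case=> _ fib_neq0; case: i. Qed.

Lemma fib_nondeg_neq0_base (s : K) (i : nat) : fib_nondeg s -> (0 < i)%N -> F s i != 0.
Proof. by move=> /(@fib_nondeg_neq0 _ 0%N i); rewrite expr0 mul1r. Qed.

End FibRecurrence.

Lemma prodf_nat_neq0 (R : idomainType) (f : nat -> R) (m n : nat) :
  (forall i, (m <= i)%N -> f i != 0) -> \prod_(m <= i < n) f i != 0.
Proof.
move=> f_neq0; rewrite prodf_seq_neq0; apply/allP => i.
by rewrite mem_index_iota => /andP[/f_neq0].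
Qed.

(* [sqpyr j] is the square pyramidal number [0^2 + 1^2 + ... + (j-1)^2]. *)
Definition sqpyr (j : nat) := ((j * (j - 1) * (2 * j - 1)) %/ 6)%N.

Lemma sqpyrS (j : nat) : sqpyr j.+1 = ('C(j, 2) + 'C(j.+1, 2) + sqpyr j)%N.
Proof.
have sqr_bin : (j * j = 'C(j, 2) + 'C(j.+1, 2))%N.
  by elim: j => [//|j IHj]; rewrite [in RHS]binS bin1 binS bin1; lia.
rewrite -sqr_bin /sqpyr -divnMDl //; congr (_ %/ _)%N.
by case: j {sqr_bin} => [//|j]; rewrite !subn1 /=; nia.
Qed.

Section FibonomialSum.
Variables (K : fieldType) (x q : K).
Hypothesis q_neq0 : q != 0.

Local Notation F s := (fib x s q).
Local Notation G := (fib_sh x q).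

Definition fibsum_coef (k j : nat) (s : K) :=
  (-1) ^+ 'C(j.+1, 2) * s ^+ 'C(j, 2) * q ^+ sqpyr j * fibonomial x s q k.+1 j.

Definition fibsum (k : nat) (s : K) (n : int) :=
  \sum_(0 <= j < k.+2) fibsum_coef k j s * G s j n ^+ k.

Lemma fibsum_coefS_top (k j : nat) (s : K) : fib_nondeg x q s -> (j <= k.+1)%N ->
  fibsum_coef k.+1 j s * (G s j k.+2 / G s 0 k.+2) = fibsum_coef k j s.
Proof.
move=> nd_s le_jk.
rewrite /fibsum_coef /fibonomial /fib_sh subr0 expr0 mul1r subzn ?(leqW le_jk) // subSn //.
rewrite [\prod_(1 <= i < k.+3) _]big_nat_recr // [\prod_(1 <= i < (k.+1 - j).+2) _]big_nat_recr //=.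
set P := \prod_(1 <= i < k.+2) _.
set D1 := \prod_(1 <= i < j.+1) _.
set D2 := \prod_(1 <= i < (k.+1 - j).+1) _.
have P_neq0 : P != 0 by apply: prodf_nat_neq0 => i; apply: fib_nondeg_neq0_base.
have D1_neq0 : D1 != 0 by apply: prodf_nat_neq0 => i; apply: fib_nondeg_neq0.
have D2_neq0 : D2 != 0 by apply: prodf_nat_neq0 => i; apply: fib_nondeg_neq0.
have Fk_neq0 : F s k.+2 != 0 by apply: fib_nondeg_neq0_base.
have Fkj_neq0 : F (q ^+ j * s) (k.+1 - j).+1 != 0 by apply: fib_nondeg_neq0.
by field; rewrite D1_neq0 D2_neq0 Fk_neq0 Fkj_neq0.
Qed.

Lemma fibsum_coefS_zero (k i : nat) (s : K) : fib_nondeg x q s -> (i <= k.+1)%N ->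
  fibsum_coef k.+1 i.+1 s * G s i.+1 0 =
  - (\prod_(1 <= l < k.+3) F s l / (s * \prod_(1 <= l < k.+2) F (q * s) l)) *
  fibsum_coef k i (q * s).
Proof.
move=> nd_s le_ik; have [s_neq0 _] := nd_s; have nd_qs := fib_nondegM q_neq0 nd_s.
rewrite /fib_sh sub0r fib_opp_shift // /fibsum_coef /fibonomial.
rewrite [\prod_(1 <= l < i.+2) _]big_nat_recr //= subnn expr0 mul1r.
have -> : \prod_(1 <= l < i.+1) F (q ^+ (i.+1 - l) * s) l =
          \prod_(1 <= l < i.+1) F (q ^+ (i - l) * (q * s)) l.
  by apply: eq_big_nat => l /andP[_ lt_li]; rewrite subSn // exprSr mulrA.
have -> : q ^+ i.+1 * s = q ^+ i * (q * s) by rewrite exprSr mulrA.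
rewrite subSS sqpyrS !binS bin1 bin0 !exprD !exprS exprMn.
set P1 := \prod_(1 <= l < k.+3) _.
set P2 := \prod_(1 <= l < k.+2) _.
set D1 := \prod_(1 <= l < i.+1) _.
set D2 := \prod_(1 <= l < (k.+1 - i).+1) _.
have P1_neq0 : P1 != 0 by apply: prodf_nat_neq0 => l; apply: fib_nondeg_neq0_base.
have P2_neq0 : P2 != 0 by apply: prodf_nat_neq0 => l; apply: fib_nondeg_neq0_base.
have D1_neq0 : D1 != 0 by apply: prodf_nat_neq0 => l; apply: fib_nondeg_neq0.
have D2_neq0 : D2 != 0 by apply: prodf_nat_neq0 => l; apply: fib_nondeg_neq0.
have Fi_neq0 : F s i.+1 != 0 by apply: fib_nondeg_neq0_base.
have [si qi] : s ^+ i != 0 /\ q ^+ i != 0 by rewrite !expf_neq0.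
have [qCi sCi] : q ^+ 'C(i, 2) != 0 /\ s ^+ 'C(i, 2) != 0 by rewrite !expf_neq0.
have sg : (-1) ^+ i != 0 :> K by rewrite signr_eq0.
field.
by rewrite D2_neq0 D1_neq0 P2_neq0 Fi_neq0 s_neq0 qi qCi si sg oppr_eq0 oner_eq0.
Qed.

Lemma fib_shS (s : K) (i : nat) (n : int) : G s i.+1 n = G (q * s) i (n - 1).
Proof.
rewrite /fib_sh exprSr -mulrA.
by have -> : n - i.+1%:Z = n - 1 - i%:Z by rewrite -addn1 PoszD; ring.
Qed.

Lemma fibsumS (k : nat) (s : K) (n : int) : fib_nondeg x q s ->
  fibsum k.+1 s n =
  G s 0 n * fibsum k s n +
  G s k.+2 n *
  (- (\prod_(1 <= l < k.+3) F s l / (s * \prod_(1 <= l < k.+2) F (q * s) l)) /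
    G s k.+2 0) * fibsum k (q * s) (n - 1).
Proof.
move=> nd_s; have [s_neq0 _] := nd_s.
have G0_top_neq0 : G s 0 k.+2 != 0.
  by rewrite /fib_sh subr0; apply: fib_nondeg_neq0.
have Gtop_0_neq0 : G s k.+2 0 != 0.
  rewrite /fib_sh sub0r fib_opp_shift // mulf_neq0 ?oppr_eq0 ?fib_nondeg_neq0_base //.
  by rewrite invr_eq0; apply: mulf_neq0; [apply: mulf_neq0|]; rewrite ?signr_eq0 ?expf_neq0.
have G_top_top : G s k.+2 k.+2 = 0 by rewrite /fib_sh subrr.
have decomp j m : G s j m =
    G s j k.+2 / G s 0 k.+2 * G s 0 m + G s j 0 / G s k.+2 0 * G s k.+2 m.
  by apply: (fib_rec_basis (x := x) q_neq0 s_neq0) => //; exact: fib_rec_shift.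
have term j : fibsum_coef k.+1 j s * G s j n ^+ k.+1 =
    G s 0 n * (fibsum_coef k.+1 j s * (G s j k.+2 / G s 0 k.+2) * G s j n ^+ k) +
    G s k.+2 n * (fibsum_coef k.+1 j s * (G s j 0 / G s k.+2 0) * G s j n ^+ k).
  by rewrite exprSr (decomp j n); ring.
rewrite /fibsum (eq_bigr _ (fun j _ => term j)).
rewrite big_split /= -!mulr_sumr.
have G_00 : G s 0 0 = 0 by [].
rewrite big_nat_recr //= G_top_top mul0r mulr0 mul0r addr0.
rewrite [X in G s k.+2 n * X]big_nat_recl //= G_00 mul0r mulr0 mul0r add0r.
congr (_ * _ + _); last first.
  rewrite !mulr_sumr; apply: eq_big_nat => i /andP[_ lt_ik].
  by rewrite [fibsum_coef _ _ _ * _]mulrA fibsum_coefS_zero // (fib_shS s i); ring.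
by apply: eq_big_nat => j /andP[_ lt_jk]; rewrite fibsum_coefS_top.
Qed.

Lemma fibsum0 (s : K) (n : int) : fibsum 0 s n = 0.
Proof.
rewrite /fibsum big_nat_recl // big_nat1 !expr0 !mulr1 /fibsum_coef /fibonomial.
have fib1 t : F t 1 = 1 by [].
rewrite !big_nat1 !big_geq // !fib1 -[sqpyr 0]/0%N -[sqpyr 1]/0%N.
by rewrite -['C(0, 2)]/0%N -['C(1, 2)]/0%N -['C(2, 2)]/1%N mulr1 invr1; ring.
Qed.

Lemma fibsum_eq0 (k : nat) (s : K) (n : int) : fib_nondeg x q s -> fibsum k s n = 0.
Proof.
elim: k s n => [|k IHk] s n nd_s; first exact: fibsum0.
rewrite fibsumS // !IHk ?mulr0 ?addr0 //; exact: fib_nondegM.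
Qed.

End FibonomialSum.

Fixpoint fib_pos_ring (R : idomainType) (x s q : R) (m : nat) : R * R :=
  match m with
  | 0%N => (0, 1)
  | m'.+1 => let p := fib_pos_ring x s q m' in (p.2, x * p.2 + q ^+ m' * s * p.1)
  end.

Lemma fib_pos_tofrac (R : idomainType) (x s q : R) (m : nat) :
  fib_pos (tofrac x) (tofrac s) (tofrac q) m =
  (tofrac (fib_pos_ring x s q m).1, tofrac (fib_pos_ring x s q m).2).
Proof.
elim: m => [|m IHm] /=; first by rewrite tofrac0 tofrac1.
by rewrite IHm /= tofracD !tofracM tofracXn.
Qed.

Lemma size_fib_pos_ringX (R : idomainType) (s q : R) (m : nat) :
  size (@fib_pos_ring {poly R} 'X s%:P q%:P m).1 = m /\
  size (@fib_pos_ring {poly R} 'X s%:P q%:P m).2 = m.+1.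
Proof.
elim: m => [|m [size1 size2]] /=; first by rewrite size_poly0 size_poly1.
split=> //.
have p2_neq0 : (@fib_pos_ring {poly R} 'X s%:P q%:P m).2 != 0 by rewrite -size_poly_eq0 size2.
have sizeX : size ('X * (fib_pos_ring 'X s%:P q%:P m).2) = m.+2.
  by rewrite mulrC size_mulX // size2.
rewrite size_polyDl sizeX // -polyC_exp -polyCM.
apply: leq_ltn_trans (size_polyMleq _ _) _; rewrite size1.
apply: leq_ltn_trans (leq_pred _) _.
by rewrite addnC -addn2 ltn_add2l ltnS size_polyC_leq1.
Qed.

Lemma varq_neq0 : varq != 0.
Proof. by rewrite !(tofrac_eq0, polyC_eq0) polyX_eq0. Qed.

Lemma fib_varx_neq0 (c : Fqs) (i : nat) : fib varx (tofrac c%:P) varq i.+1 != 0.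
Proof.
rewrite /fib /varx /varq fib_pos_tofrac /= tofrac_eq0 -size_poly_eq0.
by case: (size_fib_pos_ringX c q_Fqs i.+1) => ->.
Qed.

Lemma fib_nondeg_vars : fib_nondeg varx varq vars.
Proof.
split; first by rewrite !(tofrac_eq0, polyC_eq0) polyX_eq0.
move=> b i; rewrite /varq /vars -tofracXn -tofracM -polyC_exp -polyCM.
exact: fib_varx_neq0.
Qed.

Theorem theorem1 (k : nat) (hk : (0 < k)%N) (n : int) :
  \sum_(0 <= j < k.+2)
    (-1) ^+ 'C(j.+1, 2) * vars ^+ 'C(j, 2) *
    varq ^+ ((j * (j - 1) * (2 * j - 1)) %/ 6) *
    fibonomial varx vars varq k.+1 j *
    (fib varx (varq ^+ j * vars) varq (n - j%:Z)) ^+ k = 0 :> Fxsq.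
Proof. exact: (fibsum_eq0 varq_neq0 k n fib_nondeg_vars). Qed.
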